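(* Let $f,g:\mathbb{C}\to\mathbb{C}$ be entire functions with $f\circ g=g\circ f$, and suppose that $f$ and $g$ satisfy Property A. Then the escaping set $I(f)$ is completely invariant under $g$, and the escaping set $I(g)$ is completely invariant under $f$.
   Context: For an entire function $h$, $h^n$ denotes the $n$-th iterate. The escaping set is $I(h)=\{z\in\mathbb{C}: h^n(z)\to\infty \text{ as } n\to\infty\}$. A set $A\subseteq\mathbb{C}$ is completely invariant under a map $\phi$ if $\phi(A)\subseteq A$ and $\phi^{-1}(A)\subseteq A$. Property A for the pair $(f,g)$: for every $z\in\mathbb{C}$ and every strictly increasing sequence $(n_k)$ of natural numbers with $|f^{n_k}(z)|\to\infty$, one has $|g(f^{n_k}(z))|\to\infty$; and symmetrically, for every $z\in\mathbb{C}$ and every strictly increasing $(n_k)$ with $|g^{n_k}(z)|\to\infty$, one has $|f(g^{n_k}(z))|\to\infty$. (Informally: each of $f,g$ sends points of orbits escaping under the other function to $\infty$.) *)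

From Stdlib Require Import Reals.
From Coquelicot Require Import Coquelicot.

(* Entire function: complex-differentiable at every point of C
   (derivative taken over the absolute ring C, i.e. holomorphic). *)
Definition entire (h : C -> C) : Prop :=
  forall z : C, @ex_derive C_AbsRing C_NormedModule h z.

Fixpoint iter_fn (n : nat) (h : C -> C) (z : C) : C :=
  match n with
  | O => z
  | S m => h (iter_fn m h z)
  end.

Definition tends_to_infty (u : nat -> C) : Prop :=
  is_lim_seq (fun k => Cmod (u k)) p_infty.

Definition escaping_set (h : C -> C) (z : C) : Prop :=
  tends_to_infty (fun n => iter_fn n h z).

Definition completely_invariant (A : C -> Prop) (phi : C -> C) : Prop :=
  (forall z, A z -> A (phi z)) /\ (forall z, A (phi z) -> A z).

Definition strictly_increasing (nk : nat -> nat) : Prop :=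
  forall k, (nk k < nk (S k))%nat.

Definition property_A (f g : C -> C) : Prop :=
  (forall (z : C) (nk : nat -> nat), strictly_increasing nk ->
     tends_to_infty (fun k => iter_fn (nk k) f z) ->
     tends_to_infty (fun k => g (iter_fn (nk k) f z)))
  /\
  (forall (z : C) (nk : nat -> nat), strictly_increasing nk ->
     tends_to_infty (fun k => iter_fn (nk k) g z) ->
     tends_to_infty (fun k => f (iter_fn (nk k) g z))).

(** Forward invariance of I(f) under g is Property A along the full orbit,
    once commutation rewrites f^n(g z) as g(f^n z).  Backward invariance only
    needs g to be bounded on bounded sets, which holds for any continuous map:
    if g(f^n z) -> oo then f^n z cannot stay in a bounded set along any
    subsequence.  Boundedness on discs is obtained from uniform continuity on
    the square [-M, M]^2 by walking along the segment from 0 to z in steps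
    shorter than the modulus of uniform continuity. *)
From Stdlib Require Import Reals Lra Lia ClassicalEpsilon FunctionalExtensionality.
From Coquelicot Require Import Coquelicot.
Open Scope R_scope.

Lemma sqrt2_lt_2 : sqrt 2 < 2.
Proof. pose proof (sqrt_pos 2); pose proof (sqrt_sqrt 2); nra. Qed.

Lemma Cmod_lt_of_components (p : C) (r : R) :
  Rabs (fst p) < r -> Rabs (snd p) < r -> Cmod p < 2 * r.
Proof.
  intros H1 H2.
  assert (Hmax : Rmax (Rabs (fst p)) (Rabs (snd p)) < r) by (apply Rmax_lub_lt; assumption).
  pose proof (Cmod_2Rmax p); pose proof sqrt2_lt_2; pose proof (sqrt_pos 2).
  pose proof (Rle_trans _ _ _ (Rabs_pos (fst p)) (Rmax_l _ (Rabs (snd p)))).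
  nra.
Qed.

Lemma components_le_Cmod (p : C) : Rabs (fst p) <= Cmod p /\ Rabs (snd p) <= Cmod p.
Proof.
  pose proof (Rmax_Cmod p); split.
  - exact (Rle_trans _ _ _ (Rmax_l _ _) H).
  - exact (Rle_trans _ _ _ (Rmax_r _ _) H).
Qed.

Definition Cmod_continuous (g : C -> C) : Prop :=
  forall (x : C) (eps : posreal), exists delta : posreal,
    forall y, Cmod (y - x) < delta -> Cmod (g y - g x) < eps.

Lemma entire_Cmod_continuous (g : C -> C) : entire g -> Cmod_continuous g.
Proof.
  intros Hg x eps.
  pose proof (ex_derive_continuous g x (Hg x)) as Hc.
  pose proof (locally_le_locally_norm (K := C_AbsRing) (g x) _
                (locally_norm_ball_norm _ eps)) as Hnorm.
  destruct (Hc _ Hnorm) as [delta Hdelta].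
  exists delta; intros y Hy; exact (Hdelta y Hy).
Qed.

Lemma Cmod_sub_triangle (a b c : C) : Cmod (a - b) <= Cmod (a - c) + Cmod (b - c).
Proof.
  replace (a - b)%C with ((a - c) + - (b - c))%C by ring.
  rewrite <- (Cmod_opp (b - c)); apply Cmod_triangle.
Qed.

Section ContinuousBounded.

Variable g : C -> C.
Hypothesis g_cont : Cmod_continuous g.

Lemma uniformly_continuous_on_disc (M : R) (eps : posreal) :
  exists d : posreal, forall p p' : C, Cmod p <= M -> Cmod (p' - p) < d ->
    Cmod (g p' - g p) < eps.
Proof.
  assert (Hdl_ex : exists dl : C -> posreal, forall x y,
      Cmod (y - x) < dl x -> Cmod (g y - g x) < pos_div_2 eps).
  { exists (fun x => proj1_sig (constructive_indefinite_description _
                      (g_cont x (pos_div_2 eps)))).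
    intros x; destruct (constructive_indefinite_description _ _) as [d Hd]; exact Hd. }
  destruct Hdl_ex as [dl Hdl].
  (* coordinates within [dl / 4] give modulus within [dl / 2], since [Cmod <= sqrt 2 * max] *)
  destruct (compactness_value_2d (- M) M (- M) M
              (fun u v => pos_div_2 (pos_div_2 (dl (u, v))))) as [d Hd].
  exists d; intros p p' Hp Hpp'.
  destruct (components_le_Cmod p) as [H1 H2].
  destruct p as [x y]; simpl in H1, H2.
  apply Rnot_le_lt; intros Hfar.
  apply (Hd x y); [apply Rabs_le_between; lra | apply Rabs_le_between; lra |].
  intros (u & v & _ & _ & Hu & Hv & Hdu); simpl in Hu, Hv, Hdu.
  pose proof (cond_pos (dl (u, v))) as He.
  assert (Hp_uv : Cmod ((x, y) - (u, v)) < dl (u, v) / 2).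
  { replace (dl (u, v) / 2) with (2 * (dl (u, v) / 2 / 2)) by field.
    apply Cmod_lt_of_components; assumption. }
  assert (Hp'_uv : Cmod (p' - (u, v)) < dl (u, v)).
  { replace (p' - (u, v))%C with ((p' - (x, y)) + ((x, y) - (u, v)))%C by ring.
    pose proof (Cmod_triangle (p' - (x, y)) ((x, y) - (u, v))); lra. }
  pose proof (Hdl (u, v) _ Hp'_uv); pose proof (Hdl (u, v) (x, y) ltac:(lra)).
  pose proof (Cmod_sub_triangle (g p') (g (x, y)) (g (u, v))); simpl in *; lra.
Qed.

Lemma bounded_on_disc (M : R) :
  exists B, forall z, Cmod z <= M -> Cmod (g z) <= B.
Proof.
  destruct (uniformly_continuous_on_disc M (mkposreal 1 Rlt_0_1)) as [d Hd]; simpl in Hd.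
  pose proof (cond_pos d) as Hd_pos.
  destruct (INR_unbounded (M / d)) as [n Hn].
  set (N := S n).
  assert (HN : 0 < INR N) by apply lt_0_INR, Nat.lt_0_succ.
  assert (Hstep_lt : M / INR N < d).
  { apply (Rmult_lt_reg_r (INR N)); [exact HN |].
    assert (INR n < INR N) by apply lt_INR, Nat.lt_succ_diag_r.
    apply (Rmult_lt_reg_r (/ d)); [apply Rinv_0_lt_compat; exact Hd_pos |].
    replace (M / INR N * INR N * / d) with (M / d) by (field; lra).
    replace (d * INR N * / d) with (INR N) by (field; lra).
    lra. }
  exists (Cmod (g 0) + INR N); intros z Hz.
  pose proof (Cmod_ge_0 z).
  (* walk from [0] to [z] through the points [k / N * z], each step shorter than [d] *)
  set (zk := fun k : nat => (RtoC (INR k / INR N) * z)%C).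
  assert (Hzk : forall k, (k <= N)%nat -> Cmod (g (zk k)) <= Cmod (g 0) + INR k).
  { induction k as [| k IH]; intros Hk.
    - unfold zk; cbv beta; change (INR 0) with 0; replace (0 / INR N) with 0 by (field; lra).
      rewrite Cmult_0_l; lra.
    - assert (Hk' : (k <= N)%nat) by lia.
      assert (Htk : 0 <= INR k / INR N <= 1).
      { split; [apply Rdiv_le_0_compat; [apply pos_INR | exact HN] |].
        apply (Rmult_le_reg_r (INR N)); [exact HN |].
        replace (INR k / INR N * INR N) with (INR k) by (field; lra).
        rewrite Rmult_1_l; apply le_INR, Hk'. }
      assert (Hclose : Cmod (g (zk (S k)) - g (zk k)) < 1).
      { apply Hd.
        - unfold zk; cbv beta; rewrite Cmod_mult, Cmod_R, Rabs_pos_eq by lra; nra.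
        - replace (zk (S k) - zk k)%C with (RtoC (/ INR N) * z)%C
          by (unfold zk; cbv beta;
              replace (/ INR N) with (INR (S k) / INR N - INR k / INR N)
                by (rewrite S_INR; field; lra);
              rewrite RtoC_minus; ring).
          rewrite Cmod_mult, Cmod_R, Rabs_pos_eq by (left; apply Rinv_0_lt_compat, HN).
          apply (Rle_lt_trans _ (M / INR N)); [| exact Hstep_lt].
          unfold Rdiv; rewrite Rmult_comm; apply Rmult_le_compat_r;
            [left; apply Rinv_0_lt_compat, HN | exact Hz]. }
      pose proof (Cmod_triangle (g (zk (S k)) - g (zk k)) (g (zk k))) as Htri.
      replace (g (zk (S k)) - g (zk k) + g (zk k))%C with (g (zk (S k))) in Htri by ring.
      specialize (IH Hk'); rewrite S_INR; lra. }
  replace z with (zk N) by (unfold zk; replace (INR N / INR N) with 1 by (field; lra); ring).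
  exact (Hzk N (Nat.le_refl N)).
Qed.

End ContinuousBounded.

Lemma tends_to_infty_of_bounded_comp (g : C -> C) (u : nat -> C) :
  (forall M, exists B, forall z, Cmod z <= M -> Cmod (g z) <= B) ->
  tends_to_infty (fun n => g (u n)) -> tends_to_infty u.
Proof.
  unfold tends_to_infty; rewrite !is_lim_seq_p_infty_Reals.
  intros Hbounded Hgu M.
  destruct (Hbounded M) as [B HB].
  destruct (Hgu B) as [N HN].
  exists N; intros n Hn.
  apply Rnot_le_lt; intros Hle.
  pose proof (HN n Hn); pose proof (HB _ Hle); lra.
Qed.

Lemma iter_fn_comm (f g : C -> C) : (forall z, f (g z) = g (f z)) ->
  forall n z, iter_fn n f (g z) = g (iter_fn n f z).
Proof.
  intros Hfg n; induction n as [| n IH]; intros z; simpl; [reflexivity |].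
  rewrite IH; apply Hfg.
Qed.

Lemma escaping_set_completely_invariant (f g : C -> C) :
  (forall z, f (g z) = g (f z)) -> Cmod_continuous g ->
  (forall z, escaping_set f z -> tends_to_infty (fun n => g (iter_fn n f z))) ->
  completely_invariant (escaping_set f) g.
Proof.
  intros Hfg Hg Horbit; unfold escaping_set.
  assert (Hiter : forall z, (fun n => iter_fn n f (g z)) = (fun n => g (iter_fn n f z))).
  { intros z; apply functional_extensionality; intros n; apply iter_fn_comm, Hfg. }
  split; intros z Hz; rewrite Hiter in *.
  - exact (Horbit z Hz).
  - exact (tends_to_infty_of_bounded_comp g _ (bounded_on_disc g Hg) Hz).
Qed.

Lemma property_A_sym (f g : C -> C) : property_A f g -> property_A g f.
Proof. intros [Hfg Hgf]; split; assumption. Qed.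

Lemma property_A_orbit (f g : C -> C) : property_A f g ->
  forall z, escaping_set f z -> tends_to_infty (fun n => g (iter_fn n f z)).
Proof.
  intros [HA _] z Hz.
  apply (HA z (fun k => k)); [intros k; apply Nat.lt_succ_diag_r | exact Hz].
Qed.

Theorem mainTheorem1 (f g : C -> C) :
  entire f -> entire g ->
  (forall z : C, f (g z) = g (f z)) ->
  property_A f g ->
  completely_invariant (escaping_set f) g /\
  completely_invariant (escaping_set g) f.
Proof.
  intros Hf Hg Hfg HA; split.
  - apply escaping_set_completely_invariant;
      [exact Hfg | exact (entire_Cmod_continuous g Hg) | exact (property_A_orbit f g HA)].
  - apply escaping_set_completely_invariant;
      [intros z; symmetry; apply Hfg | exact (entire_Cmod_continuous f Hf)
      | exact (property_A_orbit g f (property_A_sym f g HA))].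
Qed.
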